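(* Let $N\in\mathbb N$, let $T$ be an $N$-valid tree, and let $\tilde T$ and $\Gamma$ be the tree and digraph constructed from $T$ as described in the context. Let $m_0$ be a mask whose values $\lambda_{\mathbf c_1,\dots,\mathbf c_{N+1}}$ are compatible with $T$, and let $A^{(0)}=(a^{(0)}_{\mathbf i_1,\dots,\mathbf i_N})$ be the array $$a^{(0)}_{\mathbf i_1,\mathbf i_2,\dots,\mathbf i_N}=\lambda_{\mathbf i_1,\mathbf i_2,\dots,\mathbf i_N,\mathbf 0}\,\lambda_{\mathbf i_2,\dots,\mathbf i_N,\mathbf 0,\mathbf 0}\cdots\lambda_{\mathbf i_N,\mathbf 0,\dots,\mathbf 0}.$$ Then for every vertex $(\mathbf i_1,\dots,\mathbf i_N)$ of $\tilde T$ of level $l\le N$ one has $a^{(0)}_{\mathbf i_1,\dots,\mathbf i_N}=1$.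
   Context: Let $p$ be a prime, $s\in\mathbb N$, and $GF(p^s)$ the field with $p^s$ elements; each $\mathbf u\in GF(p^s)$ is identified with a vector $(u^{(0)},\dots,u^{(s-1)})\in\{0,\dots,p-1\}^s$ via a fixed basis over $GF(p)$, and $\mathbf 0$ denotes the zero element. The local field $F^{(s)}$ of characteristic $p$ is the field of formal Laurent series $\sum_{j\ge k}\mathbf x_j t^j$, $\mathbf x_j\in GF(p^s)$, identified with two-sided sequences $x=(\mathbf x_j)_{j\in\mathbb Z}$ having only finitely many nonzero $\mathbf x_j$ with $j<0$. For $\mathbf a\in GF(p^s)$ and $k\in\mathbb Z$, $\mathbf a g_k$ denotes the sequence with entry $\mathbf a$ at position $k$ and $\mathbf 0$ elsewhere. The dilation is $\mathcal A(\sum_n \mathbf x_n g_n)=\sum_n\mathbf x_n g_{n-1}$. For $\mathbf u\in GF(p^s)$, $k\in\mathbb Z$, the Rademacher character is $\mathbf r_k^{\mathbf u}(x)=\exp\big(\tfrac{2\pi i}{p}\sum_{l=0}^{s-1}u^{(l)}x_k^{(l)}\big)$. Every continuous character of the additive group of $F^{(s)}$ is uniquely $\chi=\prod_{k\in\mathbb Z}\mathbf r_k^{\mathbf b_k}$ with $\mathbf b_k=\mathbf 0$ for all sufficiently large $k$; write $(\chi,x)=\chi(x)$ and let $\chi\mathcal A^{j}$ be the character $x\mapsto\chi(\mathcal A^{j}x)$. For $\mathbf a_{-N},\dots,\mathbf a_0\in GF(p^s)$ let $C(\mathbf a_{-N},\dots,\mathbf a_0)$ be the set of characters $\prod_k\mathbf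 r_k^{\mathbf b_k}$ with $\mathbf b_k=\mathbf a_k$ for $-N\le k\le 0$ and $\mathbf b_k=\mathbf 0$ for $k\ge1$ (the coset $(F^{(s)}_{-N})^\perp\mathbf r_{-N}^{\mathbf a_{-N}}\cdots\mathbf r_0^{\mathbf a_0}$). Mask: let $H_0^{(N+1)}=\{\mathbf a_{-1}g_{-1}\dot+\cdots\dot+\mathbf a_{-(N+1)}g_{-(N+1)}:\mathbf a_i\in GF(p^s)\}$. A mask is a function $m_0(\chi)=\frac1p\sum_{h\in H_0^{(N+1)}}\beta_h\overline{(\chi\mathcal A^{-1},h)}$ with $\beta_h\in\mathbb C$; it is constant on each set $C(\mathbf a_{-N},\dots,\mathbf a_0)$, and we put $\lambda_{\mathbf a_{-N},\dots,\mathbf a_0}=|m_0(\chi)|^2$ for $\chi\in C(\mathbf a_{-N},\dots,\mathbf a_0)$ (an array indexed by $GF(p^s)^{N+1}$). Trees: consider a finite rooted tree $T$ whose vertices carry labels, with arcs directed from each non-root vertex to its parent; the level of a vertex is its distance to the root. $T$ is $N$-valid if (1) every label is an element of $GF(p^s)$; (2) the root and all vertices of levels $1,\dots,N-1$ have label $\mathbf 0$; (3) for every $(\mathbf c_1,\dots,\mathbf c_N)\in GF(p^s)^N$ there is exactly one directed path $v_1\to v_2\to\cdots\to v_N$ in $T$ ($v_{i+1}$ the parent of $v_i$) whose labels are $\mathbf c_1,\dots,\mathbf c_N$. The tree $\tilde T$ has as vertices the label tuples $(\mathbf c_1,\dots,\mathbf c_N)$ of such paths, with an arc from the tuple of the path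 starting at $v$ to the tuple of the path starting at the parent of $v$; its root is $(\mathbf 0,\dots,\mathbf 0)$ and the level of a tuple in $\tilde T$ equals (level of $v_1$ in $T$) $-(N-1)$. The digraph $\Gamma$ has the same vertices; for a vertex $B=(\mathbf b_1,\dots,\mathbf b_N)$ its successor set is $D(B)=\{\mathbf d\in GF(p^s): (\mathbf b_2,\dots,\mathbf b_N,\mathbf d)$ is a vertex of $\tilde T$ of level strictly less than the level of $B\}$, and $B$ is connected in $\Gamma$ to each $(\mathbf b_2,\dots,\mathbf b_N,\mathbf d)$, $\mathbf d\in D(B)$. The values $\lambda$ are compatible with $T$ if: $\lambda_{\mathbf 0,\dots,\mathbf 0}=1$ and $\lambda_{\mathbf 0,\dots,\mathbf 0,\mathbf d}=0$ for $\mathbf d\ne\mathbf 0$; and for every vertex $B=(\mathbf b_1,\dots,\mathbf b_N)\ne(\mathbf 0,\dots,\mathbf 0)$ of $\tilde T$, $\sum_{\mathbf d\in D(B)}\lambda_{\mathbf b_1,\dots,\mathbf b_N,\mathbf d}=1$ and $\lambda_{\mathbf b_1,\dots,\mathbf b_N,\mathbf d}=0$ for $\mathbf d\notin D(B)$. The component $a_{\mathbf i_1,\dots,\mathbf i_N}$ of an $N$-dimensional array is said to correspond to the vertex $(\mathbf i_1,\dots,\mathbf i_N)$. *)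

From HB Require Import structures.
From mathcomp Require Import all_boot all_order all_algebra.
From mathcomp Require Import complex.
From mathcomp Require Import reals trigo.
Set Implicit Arguments. Unset Strict Implicit. Unset Printing Implicit Defensive.
Import Order.TTheory GRing.Theory Num.Theory.
Local Open Scope ring_scope.

(* GF(p^s), identified (via a fixed basis over GF(p)) with row vectors of
   length s over 'F_p; the coordinate u^(l) is  val (u 0 l)  in {0,...,p-1}. *)
Definition GF (p s : nat) := 'rV['F_p]_s.

Section Tree.
Variables (p s : nat) (V : finType) (root : V) (par : V -> V) (lab : V -> GF p s).

(* (V, root, par) is a finite rooted tree: par v is the parent of v (par is
   only meaningful on non-root vertices; par root = root is a sentinel). *)
Definition is_rooted_tree : Prop :=
  par root = root /\ forall v : V, exists n : nat, iter n par v = root.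

Definition lev (v : V) : nat := find (fun n => iter n par v == root) (iota 0 #|V|).

Definition pathlab (N : nat) (v : V) : N.-tuple (GF p s) :=
  [tuple lab (iter i par v) | i < N].

(* such a path exists iff v_1, ..., v_{N-1} are non-root, i.e. lev v >= N-1 *)
Definition N_valid (N : nat) : Prop :=
  is_rooted_tree /\
  (forall v : V, (lev v <= N.-1)%N -> lab v = 0) /\
  (forall c : N.-tuple (GF p s), exists! v : V, (N.-1 <= lev v)%N /\ pathlab N v = c).

(* level of a vertex (c_1,...,c_N) of tilde T : (level of v_1 in T) - (N-1) *)
Definition tlev (N : nat) (c : N.-tuple (GF p s)) : nat :=
  match [pick v | ((N.-1 <= lev v)%N) && (pathlab N v == c)] with
  | Some v => (lev v - N.-1)%N
  | None => 0
  end.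

Definition tshift (N : nat) (B : N.-tuple (GF p s)) (d : GF p s) : N.-tuple (GF p s) :=
  [tuple nth 0 (rcons B d) j.+1 | j < N].

Definition inD (N : nat) (B : N.-tuple (GF p s)) (d : GF p s) : bool :=
  (tlev (tshift B d) < tlev B)%N.

Definition compatible (R : realType) (N : nat)
    (lam : N.+1.-tuple (GF p s) -> R) : Prop :=
  let z := [tuple (0 : GF p s) | _ < N] in
  lam [tuple of rcons z 0] = 1 /\
  (forall d : GF p s, d != 0 -> lam [tuple of rcons z d] = 0) /\
  (forall B : N.-tuple (GF p s), B != z ->
     \sum_(d | inD B d) lam [tuple of rcons B d] = 1 /\
     (forall d, ~~ inD B d -> lam [tuple of rcons B d] = 0)).

End Tree.

Section Mask.
Variables (R : realType) (p s N : nat).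
Local Open Scope complex_scope.

Definition expp (t : nat) : R[i] :=
  cos (2 * pi * t%:R / p%:R) +i* sin (2 * pi * t%:R / p%:R).

(* For chi in C(c_1,...,c_{N+1}) (i.e. b_{-N} = c_1, ..., b_0 = c_{N+1}) and
   h = a_{-1} g_{-1} + ... + a_{-(N+1)} g_{-(N+1)} (h = (a_{-1},...,a_{-(N+1)})),
   (chi A^{-1}, h) = exp(2 pi i/p * sum_{j=0}^{N} sum_l b_{-j}^(l) a_{-j-1}^(l)). *)
Definition char_phase (c h : N.+1.-tuple (GF p s)) : nat :=
  \sum_(j < N.+1) \sum_(l < s)
     (val (tnth c (rev_ord j) ord0 l) * val (tnth h j ord0 l))%N.

Definition mask (beta : N.+1.-tuple (GF p s) -> R[i]) (c : N.+1.-tuple (GF p s)) : R[i] :=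
  (p%:R)^-1 * \sum_(h : N.+1.-tuple (GF p s)) beta h * conjc (expp (char_phase c h)).

Definition mask_lambda (beta : N.+1.-tuple (GF p s) -> R[i]) (c : N.+1.-tuple (GF p s)) : R :=
  (ComplexField.Normc.normc (mask beta c)) ^+ 2.

End Mask.

Definition a0 (R : realType) (p s N : nat) (lam : N.+1.-tuple (GF p s) -> R)
    (c : N.-tuple (GF p s)) : R :=
  \prod_(k < N) lam [tuple nth 0 c (k + j)%N | j < N.+1].

(* A vertex c of T~ of level l is the label tuple of the path starting at a
   vertex v of T of level N - 1 + l.  When l > 0, every successor d of c in
   Gamma is the label of a vertex of T of level at most N - 1, so d = 0 and
   compatibility forces lambda_{c,0} = 1; moreover (c_2, ..., c_N, 0) is the
   vertex of level l - 1 given by the parent of v.  Since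
   a_c = lambda_{c,0} a_{(c_2, ..., c_N, 0)}, induction on l reduces to the
   root (0, ..., 0), where every factor is lambda_{0, ..., 0} = 1. *)

From HB Require Import structures.
From mathcomp Require Import all_boot all_order all_algebra.
From mathcomp Require Import complex.
From mathcomp Require Import reals trigo.
From mathcomp Require Import zify.
Import Order.TTheory GRing.Theory Num.Theory.
Local Open Scope ring_scope.
Set Implicit Arguments. Unset Strict Implicit.

Lemma find_iota0 (P : pred nat) n m :
  (m < n)%N -> P m -> (forall k, (k < m)%N -> ~~ P k) -> find P (iota 0 n) = m.
Proof.
move=> lt_mn Pm before_m.
have has_P : has P (iota 0 n) by apply/hasP; exists m; rewrite ?mem_iota.
case: (ltngtP (find P (iota 0 n)) m) => // [lt_fm | lt_mf].
- have := nth_find 0 has_P; rewrite nth_iota ?add0n ?(ltn_trans lt_fm) // => P_find.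
  by have := before_m _ lt_fm; rewrite P_find.
- by have := before_find 0 lt_mf; rewrite nth_iota // add0n Pm.
Qed.

Lemma iter_before_findex (T : finType) (f : T -> T) x y k :
  (k < findex f x y)%N -> iter k f x != y.
Proof.
move=> lt_k; have lt_k_order : (k < order f x)%N.
  by rewrite (leq_trans lt_k) // -size_orbit index_size.
by rewrite -(nth_traject f lt_k_order) -/(orbit f x); apply/negbT/(before_find x lt_k).
Qed.

Section Level.
Variables (V : finType) (root : V) (par : V -> V).
Hypothesis tree : is_rooted_tree root par.

Lemma fconnect_root v : fconnect par v root.
Proof. by case: tree => _ /(_ v) [n <-]; apply: fconnect_iter. Qed.

Lemma lev_findex v : lev root par v = findex par v root.
Proof.
apply: find_iota0; last exact: iter_before_findex.
  exact: leq_trans (findex_max (fconnect_root v)) (max_card _).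
by rewrite /= iter_findex ?fconnect_root.
Qed.

Lemma iter_lev v : iter (lev root par v) par v = root.
Proof. by rewrite lev_findex iter_findex ?fconnect_root. Qed.

Lemma iter_before_lev v k : (k < lev root par v)%N -> iter k par v != root.
Proof. by rewrite lev_findex; apply: iter_before_findex. Qed.

Lemma iter_root n : iter n par root = root.
Proof. by case: tree => par_root _; elim: n => //= n ->. Qed.

Lemma lev_unique v m : iter m par v = root ->
  (forall k, (k < m)%N -> iter k par v != root) -> lev root par v = m.
Proof.
move=> iter_m before_m; case: (ltngtP (lev root par v) m) => // [lt_lm | lt_ml].
- by have := before_m _ lt_lm; rewrite iter_lev eqxx.
- by have := iter_before_lev lt_ml; rewrite iter_m eqxx.
Qed.

Lemma lev_iter k v : lev root par (iter k par v) = (lev root par v - k)%N.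
Proof.
case: (leqP k (lev root par v)) => [le_kl | lt_lk].
  apply: lev_unique => [|j lt_j]; rewrite -iterD; first by rewrite subnK ?iter_lev.
  by apply: iter_before_lev; lia.
rewrite (_ : (_ - k)%N = 0%N); last lia.
apply: lev_unique => [|//]; by rewrite -(subnK (ltnW lt_lk)) iterD iter_lev iter_root.
Qed.

Lemma lev_par v : lev root par (par v) = (lev root par v).-1.
Proof. by rewrite -subn1 -lev_iter. Qed.

End Level.

Lemma nth_rcons_default (T : Type) (x0 : T) (t : seq T) i :
  nth x0 (rcons t x0) i = nth x0 t i.
Proof. by rewrite nth_rcons; case: ltnP => // le_ti; rewrite nth_default //; case: eqP. Qed.

Lemma nth_mktuple_nat (T : Type) (x0 : T) n (f : 'I_n -> T) i (lt_in : (i < n)%N) :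
  nth x0 [tuple f j | j < n] i = f (Ordinal lt_in).
Proof. by rewrite -(tnth_nth x0 _ (Ordinal lt_in)) tnth_mktuple. Qed.

Lemma nth_const_tuple (T : Type) (x0 : T) n i : nth x0 [tuple x0 | _ < n] i = x0.
Proof.
case: (ltnP i n) => [lt_in | le_ni]; first by rewrite nth_mktuple_nat.
by rewrite nth_default ?size_tuple.
Qed.

Section ShiftArray.
Variables (R : realType) (p s : nat).
Local Notation G := (GF p s).

Lemma nth_tshift0 N (c : N.-tuple G) i : nth 0 (tshift c 0) i = nth 0 c i.+1.
Proof.
case: (ltnP i N) => [lt_iN | le_Ni]; first by rewrite nth_mktuple_nat nth_rcons_default.
by rewrite !nth_default ?size_tuple // ltnW.
Qed.

Lemma a0_const0 N (lam : N.+1.-tuple G -> R) :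
  lam [tuple of rcons [tuple (0 : G) | _ < N] 0] = 1 ->
  a0 lam [tuple (0 : G) | _ < N] = 1.
Proof.
move=> lam0; rewrite /a0 big1 // => k _; rewrite -lam0; congr lam.
apply: eq_from_tnth => j; rewrite tnth_mktuple (tnth_nth 0) /=.
by rewrite nth_rcons_default !nth_const_tuple.
Qed.

(* The extra last factor of [a0 lam (tshift c 0)] is [lam] at the zero tuple. *)
Lemma a0_tshift0 n (lam : n.+2.-tuple G -> R) (c : n.+1.-tuple G) :
  lam [tuple of rcons [tuple (0 : G) | _ < n.+1] 0] = 1 ->
  a0 lam c = lam [tuple of rcons c 0] * a0 lam (tshift c 0).
Proof.
move=> lam0; rewrite /a0 big_ord_recl [in RHS]big_ord_recr /=.
have -> : lam [tuple nth 0 (tshift c 0) (n + j)%N | j < n.+2] = 1.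
  rewrite -lam0; congr lam; apply: eq_from_tnth => j.
  rewrite tnth_mktuple (tnth_nth 0) nth_tshift0 nth_rcons_default nth_const_tuple.
  by rewrite nth_default // size_tuple; lia.
rewrite mulr1; congr (_ * _).
  by congr lam; apply: eq_from_tnth => j; rewrite tnth_mktuple (tnth_nth 0) nth_rcons_default.
apply: eq_bigr => i _; congr lam; apply: eq_from_tnth => j; rewrite !tnth_mktuple.
by rewrite nth_tshift0 /bump /= addSn.
Qed.

End ShiftArray.

Section TreeVertices.
Variables (R : realType) (p s n : nat) (V : finType) (root : V) (par : V -> V)
  (lab : V -> GF p s).
Local Notation G := (GF p s).
Hypothesis T_valid : N_valid root par lab n.+1.
Variable lam : n.+2.-tuple G -> R.
Hypothesis compat : compatible root par lab lam.

Let tree : is_rooted_tree root par := T_valid.1.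
Let lab_low v : (lev root par v <= n)%N -> lab v = 0 := T_valid.2.1 v.
Let pathlab_unique := T_valid.2.2.
Let z := [tuple (0 : G) | _ < n.+1].

Lemma tlev_pathlab v : (n <= lev root par v)%N ->
  tlev root par lab (pathlab par lab n.+1 v) = (lev root par v - n)%N.
Proof.
move=> le_nv; rewrite /tlev; case: pickP => [u /andP [le_nu /eqP pu] | no_pick].
  case: (pathlab_unique (pathlab par lab n.+1 v)) => w [_ w_unique].
  by rewrite -(w_unique u (conj le_nu pu)) -(w_unique v (conj le_nv erefl)).
by have := no_pick v; rewrite le_nv eqxx.
Qed.

Lemma pathlab_lev_n v : lev root par v = n -> pathlab par lab n.+1 v = z.
Proof.
move=> lev_v; apply: eq_from_tnth => i; rewrite !tnth_mktuple.
by apply: lab_low; rewrite lev_iter // lev_v leq_subr.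
Qed.

Lemma tshift_pathlab v : (lev root par v <= n + n.+1)%N ->
  tshift (pathlab par lab n.+1 v) 0 = pathlab par lab n.+1 (par v).
Proof.
move=> lev_v; apply: eq_from_tnth => j.
rewrite /tshift !tnth_mktuple -iterSr nth_rcons_default.
case: (ltnP j.+1 n.+1) => [lt_jn | le_nj]; first by rewrite nth_mktuple_nat.
rewrite nth_default ?size_tuple // lab_low // lev_iter //; lia.
Qed.

(* A successor [d] of [c] is the label of a vertex of level at most [n] in [T]. *)
Lemma inD_pathlab v d : (n <= lev root par v <= n + n.+1)%N ->
  inD root par lab (pathlab par lab n.+1 v) d -> d = 0.
Proof.
case/andP=> le_nv lev_v; rewrite /inD tlev_pathlab //.
case: (pathlab_unique (tshift (pathlab par lab n.+1 v) d)) => w [[le_nw pw] _].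
rewrite -pw tlev_pathlab // => lt_wv.
have <- : tnth (tshift (pathlab par lab n.+1 v) d) ord_max = d.
  by rewrite tnth_mktuple nth_rcons size_tuple ltnn eqxx.
by rewrite -pw tnth_mktuple lab_low // lev_iter //=; lia.
Qed.

Lemma lam_pathlab_rcons0 v : (n < lev root par v <= n + n.+1)%N ->
  lam [tuple of rcons (pathlab par lab n.+1 v) 0] = 1.
Proof.
case/andP=> lt_nv lev_v; case: (eqVneq (pathlab par lab n.+1 v) z) => [-> | neq_z].
  by case: compat.
have le_nv := ltnW lt_nv.
have inD0 : inD root par lab (pathlab par lab n.+1 v) 0.
  have le_n_pv : (n <= lev root par (par v))%N by rewrite lev_par //; lia.
  by rewrite /inD tshift_pathlab // !tlev_pathlab // lev_par //; lia.
case: compat => _ [_ /(_ _ neq_z) [sum1 _]].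
rewrite -sum1 (big_pred1 0) // => d /=; apply/idP/eqP => [|->//].
by apply: inD_pathlab; rewrite le_nv.
Qed.

Lemma a0_pathlab v : (n <= lev root par v <= n + n.+1)%N ->
  a0 lam (pathlab par lab n.+1 v) = 1.
Proof.
have lam0 : lam [tuple of rcons z 0] = 1 by case: compat.
suff a0_above k w : lev root par w = (n + k)%N -> (k <= n.+1)%N ->
    a0 lam (pathlab par lab n.+1 w) = 1.
  by case/andP=> le_nv le_v; apply: (a0_above (lev root par v - n)%N); lia.
elim: k w => [|k IH] w lev_w le_k.
  by rewrite pathlab_lev_n ?a0_const0 // lev_w addn0.
rewrite a0_tshift0 // lam_pathlab_rcons0 ?mul1r; last by rewrite lev_w; lia.
rewrite tshift_pathlab ?lev_w; last lia.
by apply: IH; [rewrite lev_par // lev_w addnS | lia].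
Qed.

End TreeVertices.

Unset Implicit Arguments.

Theorem lemma4p1 (R : realType) (p s N : nat) (p_prime : prime p) (s_pos : (0 < s)%N)
    (N_pos : (0 < N)%N)
    (V : finType) (root : V) (par : V -> V) (lab : V -> GF p s)
    (T_valid : N_valid root par lab N)
    (beta : N.+1.-tuple (GF p s) -> R[i])
    (compat : compatible root par lab (mask_lambda beta)) :
  forall c : N.-tuple (GF p s), (tlev root par lab c <= N)%N ->
    a0 (mask_lambda beta) c = 1.
Proof.
case: N N_pos T_valid beta compat => // n _ T_valid beta compat c.
case: (T_valid.2.2 c) => v [[le_nv <-] _].
rewrite tlev_pathlab // => tlev_v.
by apply: (a0_pathlab T_valid compat); move: le_nv tlev_v => /=; lia.
Qed.
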